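(* Let $M$ be a smooth compact manifold with the distance $d$ induced by a Riemannian metric, and let $\omega:\Lambda\times M\to M$ be an IFS (with $\Lambda$ a compact metric space) that is topologically stable. Then $\omega$ has the concordant shadowing property.
   Context: An IFS with phase space $M$ is given by a compact metric space $\Lambda$ and a continuous map $\omega:\Lambda\times M\to M$; write $\omega_\lambda=\omega(\lambda,\cdot)$. $C^0(M)$ denotes the continuous self-maps of $M$ with $d_{C^0}(f,g)=\max_{x}d(f(x),g(x))$. For two IFS $\omega$ (parameter space $\Lambda$) and $\tilde\omega$ (parameter space $\tilde\Lambda$) on $M$, $d_H(\omega,\tilde\omega)$ denotes the Hausdorff distance in $(C^0(M),d_{C^0})$ between the sets $\{\omega_\lambda:\lambda\in\Lambda\}$ and $\{\tilde\omega_\lambda:\lambda\in\tilde\Lambda\}$. For $\sigma=(\lambda_1,\lambda_2,\dots)\in\Lambda^{\mathbb N}$, set $\omega_{\sigma_0}=\mathrm{id}$ and $\omega_{\sigma_k}=\omega_{\lambda_k}\circ\cdots\circ\omega_{\lambda_1}$. A sequence $\{x_k\}_{k\ge0}$ is a $\delta$-chain with sequence of parameters $\sigma=(\lambda_1,\lambda_2,\dots)$ if $d(x_k,\omega_{\lambda_k}(x_{k-1}))\le\delta$ for all $k\ge1$. The IFS has the concordant shadowing property if for every $\varepsilon>0$ there is $\delta>0$ such that for every $\delta$-chain $\{x_k\}$ with sequence of parameters $\sigma$ there is $y\in M$ with $d(x_k,\omega_{\sigma_k}(y))<\varepsilon$ for all $k\ge0$. Given IFS $\omega,\tilde\omega$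 and sequences $\sigma=(\lambda_k)$ in $\Lambda$, $\tilde\sigma=(\tilde\lambda_k)$ in $\tilde\Lambda$ of the same length, the pair $(\sigma,\tilde\sigma)$ is $\delta$-compatible if $d_{C^0}(\omega_{\lambda_k},\tilde\omega_{\tilde\lambda_k})<\delta$ for all $k$. The IFS $\omega$ is topologically stable if for every $\varepsilon>0$ there is $\delta>0$ such that whenever $\tilde\omega$ is an IFS on $M$ (with any compact metric parameter space $\tilde\Lambda$) with $d_H(\omega,\tilde\omega)\le\delta$, then for every $\delta$-compatible pair $(\sigma,\tilde\sigma)\in\Lambda^{\mathbb N}\times\tilde\Lambda^{\mathbb N}$ there is a continuous $h:M\to M$ with $d_{C^0}(\omega_{\sigma_k}\circ h,\tilde\omega_{\tilde\sigma_k})<\varepsilon$ for all $k\in\mathbb N$ and $d_{C^0}(h,\mathrm{id})<\varepsilon$. *)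

From HB Require Import structures.
From mathcomp Require Import all_boot all_order all_algebra.
From mathcomp Require Import all_classical all_reals all_analysis.
Set Implicit Arguments. Unset Strict Implicit. Unset Printing Implicit Defensive.
Import Order.TTheory GRing.Theory Num.Theory.
Import numFieldNormedType.Exports.
Local Open Scope classical_set_scope.
Local Open Scope ring_scope.

(* Smooth compact manifolds, realised (Nash / Whitney) as compact embedded    *)
(* C^oo submanifolds of R^N = 'rV[R]_N, with the Riemannian distance of the   *)
(* induced metric, i.e. the intrinsic (length) distance.                      *)

Definition eucl {R : realType} {N : nat} (v : 'rV[R]_N) : R :=
  Num.sqrt (\sum_(i < N) v ord0 i ^+ 2).

Fixpoint iterD {R : realType} {k N : nat} (vs : seq 'rV[R]_k)
    (f : 'rV[R]_k -> 'rV[R]_N) : 'rV[R]_k -> 'rV[R]_N :=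
  match vs with
  | [::] => f
  | v :: vs' => fun x => derive (iterD vs' f) x v
  end.

Definition smooth_on {R : realType} {k N : nat} (U : set 'rV[R]_k)
    (f : 'rV[R]_k -> 'rV[R]_N) : Prop :=
  forall (vs : seq 'rV[R]_k) (x : 'rV[R]_k), U x -> differentiable (iterD vs f) x.

Definition embedded_submanifold {R : realType} (N k : nat) (M : set 'rV[R]_N)
  : Prop :=
  forall p, M p ->
    exists (U : set 'rV[R]_k) (V : set 'rV[R]_N)
           (phi : 'rV[R]_k -> 'rV[R]_N) (psi : 'rV[R]_N -> 'rV[R]_k),
      [/\ open U, open V & V p] /\
      smooth_on U phi /\
      (forall u, U u -> forall w : 'rV[R]_k, 'd phi u w = 0 -> w = 0) /\
      phi @` U = M `&` V /\
      (forall u, U u -> psi (phi u) = u) /\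
      {within M `&` V, continuous psi}.

Arguments embedded_submanifold {R} N k M.

Definition curve_length {R : realType} {N : nat} (gamma : R -> 'rV[R]_N)
  : \bar R :=
  ereal_sup [set s : \bar R | exists (n : nat) (t : nat -> R),
     [/\ t 0%N = 0, t n = 1, (forall i, (i < n)%N -> t i <= t i.+1) &
         s = (\sum_(i < n) eucl (gamma (t i.+1) - gamma (t i)))%:E]].

(* Riemannian (intrinsic) distance on M induced by the Euclidean metric; it *)
(* is +oo between points of different connected components.                 *)
Definition mdistM {R : realType} {N : nat} (M : set 'rV[R]_N)
    (x y : 'rV[R]_N) : \bar R :=
  ereal_inf [set curve_length gamma | gamma in
    [set gamma : R -> 'rV[R]_N |
       [/\ {within `[0, 1], continuous gamma},
           (forall t, 0 <= t <= 1 -> M (gamma t)),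
           gamma 0 = x & gamma 1 = y]]].

Local Open Scope ereal_scope.

Definition dC0 {R : realType} {N : nat} (M : set 'rV[R]_N)
    (f g : 'rV[R]_N -> 'rV[R]_N) : \bar R :=
  ereal_sup [set mdistM M (f x) (g x) | x in M].

Definition C0map {R : realType} {N : nat} (M : set 'rV[R]_N)
    (f : 'rV[R]_N -> 'rV[R]_N) : Prop :=
  (forall x, M x -> M (f x)) /\
  (forall x, M x -> forall e : R, (0 < e)%R -> exists2 d : R, (0 < d)%R &
     forall x', M x' -> mdistM M x x' < d%:E -> mdistM M (f x) (f x') < e%:E).

Definition IFS {R : realType} {N : nat} (M : set 'rV[R]_N) (L : metricType R)
    (omega : L -> 'rV[R]_N -> 'rV[R]_N) : Prop :=
  compact [set: L] /\
  (forall l x, M x -> M (omega l x)) /\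
  (forall l x, M x -> forall e : R, (0 < e)%R -> exists2 d : R, (0 < d)%R &
     forall l' x', M x' -> (mdist l l' < d)%R -> mdistM M x x' < d%:E ->
       mdistM M (omega l x) (omega l' x') < e%:E).

(* omega_{sigma_k}: sigma = (sigma 0, sigma 1, ...) = (lambda_1, lambda_2, ...) *)
Fixpoint compo {L : Type} {X : Type} (omega : L -> X -> X) (sigma : nat -> L)
    (k : nat) (x : X) : X :=
  match k with
  | 0%N => x
  | k'.+1 => omega (sigma k') (compo omega sigma k' x)
  end.

Definition delta_chain {R : realType} {N : nat} (M : set 'rV[R]_N) {L : Type}
    (omega : L -> 'rV[R]_N -> 'rV[R]_N) (delta : R) (x : nat -> 'rV[R]_N)
    (sigma : nat -> L) : Prop :=
  (forall k, M (x k)) /\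
  (forall k, mdistM M (x k.+1) (omega (sigma k) (x k)) <= delta%:E).

Definition concordant_shadowing {R : realType} {N : nat} (M : set 'rV[R]_N)
    {L : Type} (omega : L -> 'rV[R]_N -> 'rV[R]_N) : Prop :=
  forall eps : R, (0 < eps)%R -> exists2 delta : R, (0 < delta)%R &
    forall x sigma, delta_chain M omega delta x sigma ->
      exists2 y, M y & forall k, mdistM M (x k) (compo omega sigma k y) < eps%:E.

(* Hausdorff distance between {omega_l} and {omega'_l'} in (C^0(M), d_C0)   *)
(* is at most delta (sup-inf formulation, in both directions).              *)
Definition dH_le {R : realType} {N : nat} (M : set 'rV[R]_N) {L L' : Type}
    (omega : L -> 'rV[R]_N -> 'rV[R]_N) (omega' : L' -> 'rV[R]_N -> 'rV[R]_N)
    (delta : R) : Prop :=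
  (forall l (eta : R), (0 < eta)%R -> exists l', dC0 M (omega l) (omega' l') < (delta + eta)%:E) /\
  (forall l' (eta : R), (0 < eta)%R -> exists l, dC0 M (omega l) (omega' l') < (delta + eta)%:E).

Definition topologically_stable {R : realType} {N : nat} (M : set 'rV[R]_N)
    {L : Type} (omega : L -> 'rV[R]_N -> 'rV[R]_N) : Prop :=
  forall eps : R, (0 < eps)%R -> exists2 delta : R, (0 < delta)%R &
    forall (L' : metricType R) (omega' : L' -> 'rV[R]_N -> 'rV[R]_N),
      IFS M omega' -> dH_le M omega omega' delta ->
      forall (sigma : nat -> L) (sigma' : nat -> L'),
        (forall k, dC0 M (omega (sigma k)) (omega' (sigma' k)) < delta%:E) ->
        exists h, [/\ C0map M h,
          (forall k, dC0 M (compo omega sigma k \o h) (compo omega' sigma' k) < eps%:E) &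
          dC0 M h id < eps%:E].

From HB Require Import structures.
From mathcomp Require Import all_boot all_order all_algebra.
From mathcomp Require Import all_classical all_reals all_analysis.
From mathcomp Require Import ring lra.
Set Implicit Arguments. Unset Strict Implicit. Unset Printing Implicit Defensive.
Import Order.TTheory GRing.Theory Num.Theory.
Import numFieldNormedType.Exports.
Local Open Scope classical_set_scope.
Local Open Scope ring_scope.

(* Each jump of a delta-chain, from omega_(lambda_k)(x_k) to x_(k+1), is realised by a
   continuous self-map Phi_k of M that moves no point by more than delta/2: in a chart
   around the jump, translate the chart coordinates by a bump function.  Adding the maps
   Phi_k o omega_lambda as new parameters, indexed by Lambda x {0, ..., n} with the
   discrete metric, gives an IFS that is delta-close to omega and along which
   x_0, ..., x_n is an exact orbit.  Topological stability then provides h such that the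
   omega-orbit of h(x_0) stays eps/2-close to x_0, ..., x_n; a cluster point of these
   h(x_0) as n -> oo shadows the whole chain, by continuity of each omega_(sigma_k).
   Distances are intrinsic: a chart map that is Lipschitz in Euclidean terms is
   Lipschitz for the length metric, and conversely the length metric dominates the
   Euclidean one. *)

(** * Discrete and product metrics *)

Definition discrete_ord (R : realType) (n : nat) : Type := 'I_n.
HB.instance Definition _ R n := Choice.on (discrete_ord R n).

Section DiscreteOrd.
Variables (R : realType) (n : nat).

Definition discrete_dist (i j : discrete_ord R n) : R := (i != j)%:R.

Lemma discrete_dist_xx i : discrete_dist i i = 0.
Proof. by rewrite /discrete_dist eqxx. Qed.

Lemma discrete_dist_eq0 i j : discrete_dist i j = 0 -> i = j.
Proof. by rewrite /discrete_dist; case: eqP => // _ /eqP; rewrite oner_eq0. Qed.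

Lemma discrete_distC i j : discrete_dist i j = discrete_dist j i.
Proof. by rewrite /discrete_dist eq_sym. Qed.

Lemma discrete_dist_triangle j i k :
  discrete_dist i k <= discrete_dist i j + discrete_dist j k.
Proof.
rewrite /discrete_dist; case: (eqVneq i k) => [->|ik] /=; first by rewrite addr_ge0.
case: (eqVneq i j) => [<-|_] /=; first by rewrite ik add0r.
by rewrite lerDl.
Qed.

HB.instance Definition _ := @isMetric.Build R (discrete_ord R n) discrete_dist
  discrete_dist_xx discrete_dist_eq0 discrete_distC discrete_dist_triangle.

Lemma discrete_mdist_lt1 (i j : discrete_ord R n) : mdist i j < 1 -> i = j.
Proof.
rewrite (_ : mdist i j = (i != j)%:R) //.
by case: (eqVneq i j) => // _; rewrite ltxx.
Qed.

End DiscreteOrd.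

Section ProdMetric.
Variables (R : realType) (A B : metricType R).

Definition prod_dist (x y : A * B) : R := Num.max (mdist x.1 y.1) (mdist x.2 y.2).

Lemma prod_dist_ge0 x y : 0 <= prod_dist x y.
Proof. by rewrite /prod_dist le_max mdist_ge0. Qed.

Lemma prod_dist_eq0 x y : prod_dist x y = 0 -> x = y.
Proof.
case: x y => [a b] [c d]; rewrite /prod_dist /= => h.
have ac : mdist a c = 0 by apply/eqP; rewrite eq_le mdist_ge0 andbT -h le_max lexx.
have bd : mdist b d = 0.
  by apply/eqP; rewrite eq_le mdist_ge0 andbT -h le_max lexx orbT.
by rewrite (mdist_positivity _ _ ac) (mdist_positivity _ _ bd).
Qed.

Lemma prod_ballE x e : ball x e = [set y | prod_dist x y < e].
Proof.
apply/seteqP; split => y /=.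
  by case=> /=; rewrite !ballEmdist /= => h1 h2; rewrite /prod_dist gt_max h1 h2.
by rewrite /prod_dist gt_max => /andP[h1 h2]; split; rewrite ballEmdist.
Qed.

HB.instance Definition _ := @PseudoMetric_isMetric.Build R (A * B)%type prod_dist
  prod_dist_ge0 prod_dist_eq0 prod_ballE.

Lemma mdist_prod_lt (x y : A * B) e :
  mdist x y < e -> mdist x.1 y.1 < e /\ mdist x.2 y.2 < e.
Proof. by rewrite (_ : mdist x y = prod_dist x y) // /prod_dist gt_max => /andP[]. Qed.

End ProdMetric.

Lemma compact_prod_discrete_ord (R : realType) (L : metricType R) n :
  compact [set: L] -> compact [set: L * discrete_ord R n].
Proof.
move=> cL; rewrite -setXTT; apply: compact_setX => //.
exact/finite_compact/(@finite_finset 'I_n setT).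
Qed.

(** * The Euclidean norm *)

Section Euclidean.
Variables (R : realType) (N : nat).
Implicit Types (u v : 'rV[R]_N).

Lemma eucl_ge0 v : 0 <= eucl v. Proof. exact: sqrtr_ge0. Qed.

Lemma eucl0 : eucl (0 : 'rV[R]_N) = 0.
Proof. by rewrite /eucl big1 ?sqrtr0 // => i _; rewrite mxE expr0n. Qed.

Lemma eucl_distC u v : eucl (u - v) = eucl (v - u).
Proof.
rewrite /eucl; congr Num.sqrt; apply: eq_bigr => i _.
by rewrite !mxE -sqrrN opprB.
Qed.

Lemma norm_le_eucl v : `|v| <= eucl v.
Proof.
rewrite -[`|v|]/(mx_norm v) mx_normrE; apply/bigmax_leP; split; first exact: eucl_ge0.
move=> [a i] _ /=; rewrite (ord1 a) /eucl -sqrtr_sqr ler_wsqrtr //.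
by rewrite (bigD1 i) //= lerDl sumr_ge0 // => j _; exact: sqr_ge0.
Qed.

Lemma eucl_le_sum_norm v : eucl v <= \sum_i `|v ord0 i|.
Proof.
rewrite -ler_sqr ?nnegrE ?eucl_ge0 ?sumr_ge0 // sqr_sqrtr; last by apply: sumr_ge0 => i _; exact: sqr_ge0.
rewrite expr2 mulr_suml; apply: ler_sum => i _.
rewrite -real_normK ?num_real // expr2 ler_wpM2l //.
by rewrite (bigD1 i) //= lerDl sumr_ge0.
Qed.

(* Lagrange's identity: the defect is half a sum of squares. *)
Lemma cauchy_schwarz (a b : 'I_N -> R) :
  (\sum_i a i * b i) ^+ 2 <= (\sum_i a i ^+ 2) * (\sum_i b i ^+ 2).
Proof.
have lagrange : \sum_i \sum_j (a i * b j - a j * b i) ^+ 2 =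
   2 * ((\sum_i a i ^+ 2) * (\sum_i b i ^+ 2) - (\sum_i a i * b i) ^+ 2).
  transitivity (\sum_i \sum_j (a i ^+ 2 * b j ^+ 2) + \sum_i \sum_j (a j ^+ 2 * b i ^+ 2)
     - 2 * \sum_i \sum_j ((a i * b i) * (a j * b j))).
    rewrite mulr_sumr -big_split /= -sumrB; apply: eq_bigr => i _.
    rewrite mulr_sumr -big_split /= -sumrB; apply: eq_bigr => j _; ring.
  rewrite (exchange_big _ _ _ _ _ (fun i j => a j ^+ 2 * b i ^+ 2)) /=.
  by rewrite -!big_distrlr /= expr2; ring.
have : 0 <= \sum_i \sum_j (a i * b j - a j * b i) ^+ 2.
  by apply: sumr_ge0 => i _; apply: sumr_ge0 => j _; exact: sqr_ge0.
by rewrite lagrange pmulr_rge0 // subr_ge0.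
Qed.

Lemma ler_euclD u v : eucl (u + v) <= eucl u + eucl v.
Proof.
have sq_ge0 w : 0 <= \sum_i w ord0 i ^+ 2 :> R.
  by apply: sumr_ge0 => i _; exact: sqr_ge0.
rewrite -ler_sqr ?nnegrE ?addr_ge0 ?eucl_ge0 // /eucl sqrrD !sqr_sqrtr //.
have -> : \sum_i (u + v) ord0 i ^+ 2 = \sum_i u ord0 i ^+ 2 + \sum_i v ord0 i ^+ 2
   + 2 * \sum_i (u ord0 i * v ord0 i).
  rewrite mulr_sumr -!big_split /=; apply: eq_bigr => i _; rewrite mxE; ring.
suff : \sum_i u ord0 i * v ord0 i <=
    Num.sqrt (\sum_i u ord0 i ^+ 2) * Num.sqrt (\sum_i v ord0 i ^+ 2).
  by rewrite mulr2n mulrDl !mul1r; lra.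
rewrite (le_trans (real_ler_norm _)) ?num_real // -sqrtrM // -sqrtr_sqr.
exact/ler_wsqrtr/cauchy_schwarz.
Qed.

End Euclidean.

(** * The intrinsic distance *)

Lemma partition_in01 (R : realType) (t : nat -> R) n : t 0%N = 0 -> t n = 1 ->
  (forall i, (i < n)%N -> t i <= t i.+1) -> forall i, (i <= n)%N -> 0 <= t i <= 1.
Proof.
move=> t0 tn tm.
have ge0 i : (i <= n)%N -> 0 <= t i.
  elim: i => [|i IH] hi; first by rewrite t0.
  exact: le_trans (IH (ltnW hi)) (tm i hi).
have le1 j i : (i + j = n)%N -> t i <= 1.
  elim: j i => [|j IH] i hij; first by rewrite -tn -hij addn0.
  apply: le_trans (tm i _) (IH i.+1 _); last by rewrite addSnnS.
  by rewrite -hij addnS ltnS leq_addr.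
by move=> i hi; rewrite ge0 //=; apply: (le1 (n - i)%N); exact: subnKC.
Qed.

Section IntrinsicDistance.
Variables (R : realType) (N : nat) (M : set 'rV[R]_N).
Local Notation d := (mdistM M).
Implicit Types (g : R -> 'rV[R]_N) (x y z : 'rV[R]_N).

Lemma within01P g : {within `[0, 1], continuous g} <->
  (forall t, 0 <= t <= 1 -> forall e, 0 < e -> exists2 dl, 0 < dl &
     forall s, 0 <= s <= 1 -> `|s - t| < dl -> `|g s - g t| < e).
Proof.
rewrite subspace_continuousP; split.
  move=> h t t01 e e0.
  have /cvgrPdist_lt /(_ e e0) := h t (t01 : [set` `[0, 1]] t).
  rewrite /within nearE => /nbhs_ballP [dl dl0 H]; exists dl => // s s01 st.
  by rewrite distrC; apply: (H s) => //; rewrite /ball /= distrC.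
move=> h t t01; apply/cvgrPdist_lt => e e0.
have [dl dl0 H] := h t t01 e e0.
rewrite /within nearE; apply/nbhs_ballP; exists dl => // s st s01.
by rewrite distrC; apply: H => //; rewrite distrC.
Qed.

Definition path_in g x y : Prop :=
  [/\ {within `[0, 1], continuous g}, (forall t, 0 <= t <= 1 -> M (g t)),
      g 0 = x & g 1 = y].

Lemma mdistM_le_length g x y : path_in g x y -> (d x y <= curve_length g)%E.
Proof. by move=> h; apply: ereal_inf_lbound; exists g. Qed.

Lemma mdistM_lt_path x y (a : \bar R) : (d x y < a)%E ->
  exists2 g, path_in g x y & (curve_length g < a)%E.
Proof. by move=> /ereal_inf_lt [_ [g hg <-] h]; exists g. Qed.

Lemma curve_length_le g (c : \bar R) : (forall n (t : nat -> R), t 0%N = 0 -> t n = 1 ->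
    (forall i, (i < n)%N -> t i <= t i.+1) ->
    ((\sum_(i < n) eucl (g (t i.+1) - g (t i)))%:E <= c)%E) ->
  (curve_length g <= c)%E.
Proof. by move=> h; apply: ge_ereal_sup => _ [n [t [t0 tn tm ->]]]; exact: h. Qed.

Lemma partition_sum_le_length g n (t : nat -> R) : t 0%N = 0 -> t n = 1 ->
  (forall i, (i < n)%N -> t i <= t i.+1) ->
  ((\sum_(i < n) eucl (g (t i.+1) - g (t i)))%:E <= curve_length g)%E.
Proof. by move=> t0 tn tm; apply: ereal_sup_ubound; exists n, t; split. Qed.

Lemma chord_le_length g : ((eucl (g 1 - g 0))%:E <= curve_length g)%E.
Proof.
pose t i : R := if i is 0%N then 0 else 1.
have := @partition_sum_le_length g 1 t erefl erefl.
by rewrite big_ord1; apply => i; rewrite ltnS leqn0 => /eqP ->.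
Qed.

Lemma eucl_le_mdistM x y : ((eucl (y - x))%:E <= d x y)%E.
Proof.
apply/ereal_infP => _ [g [_ _ <- <-] <-]; exact: chord_le_length.
Qed.

Lemma mdistM_ge0 x y : (0 <= d x y)%E.
Proof. by apply: le_trans (eucl_le_mdistM x y); rewrite lee_fin eucl_ge0. Qed.

Lemma mdistM_lt_norm x y (a : R) : (d x y < a%:E)%E -> `|y - x| < a.
Proof.
move=> h; apply: le_lt_trans (norm_le_eucl _) _; rewrite -lte_fin.
exact: le_lt_trans (eucl_le_mdistM x y) h.
Qed.

Lemma mdistM_xx x : M x -> d x x = 0.
Proof.
move=> Mx; apply/le_anti; rewrite mdistM_ge0 andbT.
apply: le_trans (mdistM_le_length (g := fun=> x) _) _.
  by split => //; exact: continuous_subspaceT (@cst_continuous _ _ x).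
by apply: curve_length_le => n t _ _ _; rewrite big1 // => i _; rewrite subrr eucl0.
Qed.

Lemma curve_length_rev g : (curve_length (fun t => g (1 - t)%R) <= curve_length g)%E.
Proof.
apply: curve_length_le => n t t0 tn tm.
pose t' i := 1 - t (n - i)%N.
have -> : \sum_(i < n) eucl (g (1 - t i.+1) - g (1 - t i)) =
          \sum_(i < n) eucl (g (t' i.+1) - g (t' i)).
  rewrite (reindex_inj rev_ord_inj) /=; apply: eq_bigr => i _.
  by rewrite /t' eucl_distC subnSK.
apply: partition_sum_le_length; rewrite /t' ?subn0 ?tn ?subnn ?t0 ?subrr ?subr0 //.
move=> i ilt; rewrite lerD2l lerN2.
have -> : (n - i = (n - i.+1).+1)%N by rewrite subnSK.
by apply: tm; rewrite subnSK // leq_subr.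
Qed.

Lemma path_in_rev g x y : path_in g x y -> path_in (fun t => g (1 - t)) y x.
Proof.
move=> [gc gM g0 g1]; split; rewrite ?subr0 ?subrr //.
- apply/within01P => t t01 e e0.
  have t01' : 0 <= 1 - t <= 1 by move: t01 => /andP[? ?]; apply/andP; split; lra.
  have [dl dl0 H] := (within01P g).1 gc _ t01' e e0.
  exists dl => // s s01 st; apply: H.
    by move: s01 => /andP[? ?]; apply/andP; split; lra.
  by rewrite (_ : 1 - s - (1 - t) = t - s) 1?distrC //; ring.
- by move=> t /andP[? ?]; apply: gM; apply/andP; split; lra.
Qed.

Lemma mdistM_sym x y : d x y = d y x.
Proof.
suff le_sym a b : (d b a <= d a b)%E by apply/le_anti; rewrite !le_sym.
apply/ereal_infP => _ [g pg <-].
exact: le_trans (mdistM_le_length (path_in_rev pg)) (curve_length_rev g).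
Qed.

Lemma within01_comp_lipschitz g (s : R -> R) (c : R) : 0 < c ->
  {within `[0, 1], continuous g} -> (forall t, 0 <= t <= 1 -> 0 <= s t <= 1) ->
  (forall t t', `|s t - s t'| <= c * `|t - t'|) ->
  {within `[0, 1], continuous (g \o s)}.
Proof.
move=> c0 gc s01 slip; apply/within01P => t t01 e e0.
have [dl dl0 H] := (within01P g).1 gc _ (s01 t t01) e e0.
exists (dl / c); first by rewrite divr_gt0.
move=> u u01 ut; apply: H (s01 u u01) _; apply: le_lt_trans (slip u t) _.
by rewrite mulrC -ltr_pdivlMr.
Qed.

Lemma curve_length_comp_le g (s : R -> R) : s 0 = 0 -> s 1 = 1 ->
  {homo s : a b / a <= b} -> (curve_length (g \o s) <= curve_length g)%E.
Proof.
move=> s0 s1 smono; apply: curve_length_le => n t t0 tn tm.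
apply: (@partition_sum_le_length g n (s \o t)); rewrite /= ?t0 ?tn //.
by move=> i /tm /smono.
Qed.

Definition first_half (t : R) := Num.min (2 * t) 1.
Definition second_half (t : R) := Num.max (2 * t - 1) 0.

(* On [[0, 1/2]] the second summand is [g2 0 = y], on [[1/2, 1]] the first is [g1 1 = y]. *)
Definition path_cat g1 g2 y t := g1 (first_half t) + g2 (second_half t) - y.

Lemma first_half_lipschitz t t' : `|first_half t - first_half t'| <= 2 * `|t - t'|.
Proof.
have := lexx `|2 * t - 2 * t'|; rewrite {1}ler_norml => /andP[h1 h2].
have -> : 2 * `|t - t'| = `|2 * t - 2 * t'| by rewrite -mulrBr normrM ger0_norm.
rewrite /first_half ler_norml.
by case: (leP (2 * t) 1) => ?; case: (leP (2 * t') 1) => ?; apply/andP; split; lra.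
Qed.

Lemma second_half_lipschitz t t' : `|second_half t - second_half t'| <= 2 * `|t - t'|.
Proof.
have := lexx `|2 * t - 2 * t'|; rewrite {1}ler_norml => /andP[h1 h2].
have -> : 2 * `|t - t'| = `|2 * t - 2 * t'| by rewrite -mulrBr normrM ger0_norm.
rewrite /second_half ler_norml.
by case: (leP (2 * t - 1) 0) => ?; case: (leP (2 * t' - 1) 0) => ?; apply/andP; split; lra.
Qed.

Lemma first_half_homo : {homo first_half : a b / a <= b}.
Proof.
move=> a b ab; rewrite /first_half.
by case: (leP (2 * a) 1) => ?; case: (leP (2 * b) 1) => ?; lra.
Qed.

Lemma second_half_homo : {homo second_half : a b / a <= b}.
Proof.
move=> a b ab; rewrite /second_half.
by case: (leP (2 * a - 1) 0) => ?; case: (leP (2 * b - 1) 0) => ?; lra.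
Qed.

Lemma first_half01 t : 0 <= t <= 1 -> 0 <= first_half t <= 1.
Proof.
by move=> /andP[? ?]; rewrite /first_half; case: (leP (2 * t) 1) => ?; apply/andP; split; lra.
Qed.

Lemma second_half01 t : 0 <= t <= 1 -> 0 <= second_half t <= 1.
Proof.
move=> /andP[? ?]; rewrite /second_half.
by case: (leP (2 * t - 1) 0) => ?; apply/andP; split; lra.
Qed.

Lemma first_half0 : first_half 0 = 0.
Proof. by rewrite /first_half mulr0; case: leP => //; lra. Qed.

Lemma first_half1 : first_half 1 = 1.
Proof. by rewrite /first_half mulr1; case: leP => //; lra. Qed.

Lemma second_half0 : second_half 0 = 0.
Proof. by rewrite /second_half mulr0 sub0r; case: leP => //; lra. Qed.

Lemma second_half1 : second_half 1 = 1.
Proof. by rewrite /second_half mulr1; case: leP => //; lra. Qed.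

Lemma path_in_cat g1 g2 x y z :
  path_in g1 x y -> path_in g2 y z -> path_in (path_cat g1 g2 y) x z.
Proof.
move=> [gc1 gM1 g10 g11] [gc2 gM2 g20 g21]; split.
- have c1 := within01_comp_lipschitz (ltr0Sn R 1) gc1 first_half01 first_half_lipschitz.
  have c2 := within01_comp_lipschitz (ltr0Sn R 1) gc2 second_half01 second_half_lipschitz.
  apply/subspace_continuousP => t t01; apply: cvgB; last exact: cvg_cst.
  by apply: cvgD; apply: (subspace_continuousP _ _).1.
- move=> t t01; rewrite /path_cat /second_half; case: (leP (2 * t - 1) 0) => h.
    by rewrite g20 addrK; apply: gM1; exact: first_half01.
  have -> : first_half t = 1 by rewrite /first_half; case: (leP (2 * t) 1) => ?; lra.
  rewrite g11 [y + _]addrC addrK; apply: gM2.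
  by move: t01 => /andP[? ?]; apply/andP; split; lra.
- by rewrite /path_cat first_half0 second_half0 g10 g20 addrK.
- by rewrite /path_cat first_half1 second_half1 g11 g21 [y + _]addrC addrK.
Qed.

Lemma curve_length_cat_le g1 g2 y :
  (curve_length (path_cat g1 g2 y) <= curve_length g1 + curve_length g2)%E.
Proof.
apply: curve_length_le => n t t0 tn tm.
pose S g (s : R -> R) := \sum_(i < n) eucl (g (s (t i.+1)) - g (s (t i))).
have S_le g s : s 0 = 0 -> s 1 = 1 -> {homo s : a b / a <= b} ->
    ((S g s)%:E <= curve_length g)%E.
  move=> s0 s1 smono; apply: le_trans (curve_length_comp_le g s0 s1 smono).
  by apply: (@partition_sum_le_length _ n t).
apply: le_trans (_ : ((S g1 first_half)%:E + (S g2 second_half)%:E <= _)%E); last first.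
  apply: leeD; apply: S_le.
  - exact: first_half0.
  - exact: first_half1.
  - exact: first_half_homo.
  - exact: second_half0.
  - exact: second_half1.
  - exact: second_half_homo.
rewrite -EFinD lee_fin -big_split; apply: ler_sum => i _.
rewrite /path_cat opprB addrA subrK opprD addrACA; exact: ler_euclD.
Qed.

Lemma mdistM_lt_triangle x y z (a b : R) : (d x y < a%:E)%E -> (d y z < b%:E)%E ->
  (d x z < (a + b)%:E)%E.
Proof.
move=> /mdistM_lt_path [g1 pg1 lt1] /mdistM_lt_path [g2 pg2 lt2].
apply: le_lt_trans (mdistM_le_length (path_in_cat pg1 pg2)) _.
by apply: le_lt_trans (curve_length_cat_le g1 g2 y) _; rewrite EFinD lteD.
Qed.

End IntrinsicDistance.

(** * Smooth maps are locally Lipschitz *)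

Lemma ball_convex (R : realType) k (u0 u v : 'rV[R]_k) r s :
  ball u0 r u -> ball u0 r v -> 0 <= s <= 1 -> ball u0 r (u + s *: (v - u)).
Proof.
rewrite -!ball_normE /= => bu bv /andP[s0 s1].
have -> : u0 - (u + s *: (v - u)) = (1 - s) *: (u0 - u) + s *: (u0 - v).
  by apply/rowP => j; rewrite !mxE; ring.
apply: le_lt_trans (ler_normD _ _) _.
rewrite !mx_normZ (ger0_norm s0) ger0_norm; last by lra.
have h1 : (1 - s) * `|u0 - u| <= (1 - s) * Num.max `|u0 - u| `|u0 - v|.
  by rewrite ler_wpM2l ?le_max ?lexx //; lra.
have h2 : s * `|u0 - v| <= s * Num.max `|u0 - u| `|u0 - v|.
  by rewrite ler_wpM2l // le_max lexx orbT.
have : Num.max `|u0 - u| `|u0 - v| < r by rewrite gt_max bu bv.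
lra.
Qed.

Section SmoothLipschitz.
Variables (R : realType) (k N : nat).
Implicit Types (phi : 'rV[R]_k -> 'rV[R]_N) (U : set 'rV[R]_k).
Local Notation e j := (delta_mx ord0 j : 'rV[R]_k).

Lemma is_derive_line_coord phi (x0 w : 'rV[R]_k) (t : R) i :
  derivable phi (x0 + t *: w) w ->
  is_derive t 1 (fun s : R => phi (x0 + s *: w) ord0 i) ('D_w phi (x0 + t *: w) ord0 i).
Proof.
move=> dphi; set a := x0 + t *: w.
set G := (fun h : R => h^-1 *: (((fun s : R => phi (x0 + s *: w) ord0 i) \o shift t) (h *: 1)
            - phi (x0 + t *: w) ord0 i)).
have G_coord : G = (fun A : 'rV[R]_N => A ord0 i) \o
             (fun h : R => h^-1 *: ((phi \o shift a) (h *: w) - phi a)).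
  apply: funext => h /=; rewrite !mxE /a; congr (_ * (phi _ _ _ - _)).
  by rewrite /shift /= [h%:A]mulr1 scalerDl addrCA addrC.
have cvgG : G @ 0^' --> ('D_w phi a) ord0 i.
  rewrite G_coord; apply: (@cvg_comp _ _ _ _ _ _ (nbhs ('D_w phi a))); first exact: dphi.
  exact: coord_continuous.
split; first by apply/cvg_ex; exists ('D_w phi a ord0 i).
by rewrite /derive -/G; apply: cvg_lim.
Qed.

Lemma entry_le_mx_norm m n (A : 'M[R]_(m, n)) i j : `|A i j| <= `|A|.
Proof. by rewrite -[`|A|]/(mx_norm A) mx_normrE; exact: (le_bigmax _ _ (i, j)). Qed.

Lemma derive_coord_le phi x w i : differentiable phi x ->
  `|'D_w phi x ord0 i| <= `|w| * \sum_j `|'D_(e j) phi x|.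
Proof.
move=> dx; rewrite deriveE //.
rewrite {1}(matrix_sum_delta w) big_ord1 linear_sum /= mulr_sumr.
rewrite summxE; apply: le_trans (ler_norm_sum _ _ _) _; apply: ler_sum => j _.
rewrite linearZ /= mxE normrM -deriveE //.
by apply: ler_pM => //; exact: entry_le_mx_norm.
Qed.

Lemma partials_locally_bounded U phi u0 : open U -> smooth_on U phi -> U u0 ->
  exists r B, [/\ 0 < r, 0 <= B &
    forall x, ball u0 r x -> U x /\ \sum_j `|'D_(e j) phi x| <= B].
Proof.
move=> oU sm Uu0.
have near_bound : \forall x \near u0,
    U x /\ forall j, `|'D_(e j) phi x| <= `|'D_(e j) phi u0| + 1.
  near=> x; split; first by near: x; apply: open_nbhs_nbhs.
  near: x; apply: filter_forall => j.
  have /cvgrPdist_lt /(_ 1 ltr01) : {for u0, continuous ('D_(e j) phi)}.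
    exact: differentiable_continuous (sm [:: e j] u0 Uu0).
  apply: filter_app; near=> x => hx.
  have := ler_normD ('D_(e j) phi u0) ('D_(e j) phi x - 'D_(e j) phi u0).
  rewrite addrC subrK distrC => /le_trans; apply; rewrite lerD2l; exact: ltW.
move/nbhs_ballP: near_bound => [r r0 hr].
exists r, (\sum_j (`|'D_(e j) phi u0| + 1)); split => //.
  by apply: sumr_ge0 => j _; rewrite addr_ge0.
move=> x /hr [Ux hx]; split => //; exact: ler_sum.
Unshelve. all: by end_near.
Qed.

Lemma coord_lipschitz_on_ball phi u0 r B :
  (forall x, ball u0 r x -> differentiable phi x /\ \sum_j `|'D_(e j) phi x| <= B) ->
  forall u v i, ball u0 r u -> ball u0 r v ->
    `|(phi v - phi u) ord0 i| <= B * `|v - u|.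
Proof.
move=> hball u v i bu bv; set w := v - u.
have hseg (s : R) : 0 <= s <= 1 ->
    differentiable phi (u + s *: w) /\ \sum_j `|'D_(e j) phi (u + s *: w)| <= B.
  by move=> s01; apply: hball; exact: ball_convex.
pose h (s : R) : R := phi (u + s *: w) ord0 i.
have hd (s : R) : 0 <= s <= 1 -> is_derive s 1 h ('D_w phi (u + s *: w) ord0 i).
  by move=> /hseg[dx _]; apply: is_derive_line_coord; exact: diff_derivable.
have hcont : {within `[0, 1], continuous h}.
  apply: continuous_in_subspaceT => s; rewrite inE /= in_itv /= => /hd [dv _].
  by apply: differentiable_continuous; exact/derivable1_diffP.
have hd' (s : R) : s \in `]0, 1[ -> is_derive s 1 h ('D_w phi (u + s *: w) ord0 i).
  by rewrite in_itv /= => /andP[? ?]; apply: hd; apply/andP; split; exact: ltW.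
have [c c01 hc] := MVT_segment ler01 hd' hcont.
have -> : (phi v - phi u) ord0 i = h 1 - h 0.
  by rewrite /h !mxE scale1r scale0r addr0 /w [u + _]addrC subrK.
rewrite hc subr0 mulr1 mulrC; move: c01; rewrite in_itv /= => /hseg [dc hB].
by apply: le_trans (derive_coord_le w i dc) _; rewrite ler_wpM2l.
Qed.

Lemma smooth_locally_lipschitz U phi u0 : open U -> smooth_on U phi -> U u0 ->
  exists r C, [/\ 0 < r, 0 <= C, ball u0 r `<=` U &
    forall u v, ball u0 r u -> ball u0 r v -> eucl (phi v - phi u) <= C * `|v - u|].
Proof.
move=> oU sm Uu0; have [r [B [r0 B0 hr]]] := partials_locally_bounded oU sm Uu0.
have hball x : ball u0 r x -> differentiable phi x /\ \sum_j `|'D_(e j) phi x| <= B.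
  by move=> /hr [Ux hB]; split => //; exact: sm [::] x Ux.
exists r, (N%:R * B); split => //; first by rewrite mulr_ge0.
  by move=> x /hr [].
move=> u v bu bv; apply: le_trans (eucl_le_sum_norm _) _.
apply: le_trans (_ : \sum_(i < N) (B * `|v - u|) <= _).
  by apply: ler_sum => i _; exact: (coord_lipschitz_on_ball hball i bu bv).
by rewrite sumr_const card_ord -mulrA mulr_natl.
Qed.
End SmoothLipschitz.

Lemma mdistM_image_segment_le (R : realType) k N (M : set 'rV[R]_N)
    (phi : 'rV[R]_k -> 'rV[R]_N) u0 r C :
  0 <= C -> (forall u, ball u0 r u -> M (phi u)) ->
  (forall u v, ball u0 r u -> ball u0 r v -> eucl (phi v - phi u) <= C * `|v - u|) ->
  forall u v, ball u0 r u -> ball u0 r v ->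
  (mdistM M (phi u) (phi v) <= (C * `|v - u|)%:E)%E.
Proof.
move=> C0 phiM phi_lip u v bu bv; set w := v - u.
pose g (t : R) := phi (u + t *: w).
have seg t : 0 <= t <= 1 -> ball u0 r (u + t *: w) by exact: ball_convex.
have g_lip a b : 0 <= a <= 1 -> 0 <= b <= 1 ->
    eucl (g b - g a) <= C * `|w| * `|b - a|.
  move=> a01 b01; apply: le_trans (phi_lip _ _ (seg _ a01) (seg _ b01)) _.
  have -> : u + b *: w - (u + a *: w) = (b - a) *: w.
    by apply/rowP => j; rewrite !mxE; ring.
  by rewrite mx_normZ mulrAC mulrA.
have Cw0 : 0 <= C * `|w| by rewrite mulr_ge0.
apply: le_trans (mdistM_le_length (g := g) _) _.
  split; rewrite /g ?scale0r ?addr0 ?scale1r ?[u + _]addrC ?subrK //.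
  - apply/within01P => t t01 e e0; exists (e / (C * `|w| + 1)).
      by rewrite divr_gt0 // ltr_pwDr.
    move=> s s01 st; apply: le_lt_trans (norm_le_eucl _) _.
    apply: le_lt_trans (g_lip _ _ t01 s01) _.
    rewrite ltr_pdivlMr ?ltr_pwDr // in st.
    have : C * `|w| * `|s - t| <= `|s - t| * (C * `|w| + 1).
      by rewrite mulrC ler_wpM2l // lerDl.
    lra.
  - by move=> t /seg; exact: phiM.
apply: curve_length_le => n t t0 tn tm; rewrite lee_fin.
have t01 := partition_in01 t0 tn tm.
apply: le_trans (_ : \sum_(i < n) C * `|w| * (t i.+1 - t i) <= _).
  apply: ler_sum => i _; have ilt := ltn_ord i.
  apply: le_trans (g_lip _ _ (t01 _ (ltnW ilt)) (t01 _ ilt)) _.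
  by rewrite ger0_norm // subr_ge0 tm.
rewrite -mulr_sumr -(big_mkord xpredT (fun i => t i.+1 - t i)) telescope_sumr //.
by rewrite tn t0 subr0 mulr1.
Qed.

(** * Charts and small pushes *)

Section NormBalls.
Variables (R : realType) (a b : nat).
Implicit Types (x z : 'rV[R]_a) (f : 'rV[R]_a -> 'rV[R]_b).

Lemma within_continuous_norm_lt (A : set 'rV[R]_a) f x :
  {within A, continuous f} -> A x -> forall e : R, 0 < e ->
  exists2 th : R, 0 < th & forall z, A z -> `|x - z| < th -> `|f x - f z| < e.
Proof.
move=> /subspace_continuousP fc Ax e e0.
have /cvgrPdist_lt /(_ e e0) := fc x Ax.
rewrite /within nearE => /nbhs_ballP [th th0 H]; exists th => // z Az xz.
by apply: (H z) => //; rewrite -ball_normE.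
Qed.

Lemma continuous_norm_lt f x : {for x, continuous f} -> forall e : R, 0 < e ->
  exists2 th : R, 0 < th & forall z, `|x - z| < th -> `|f x - f z| < e.
Proof.
move=> /cvgrPdist_lt fc e e0; have := fc e e0.
rewrite nearE => /nbhs_ballP [th th0 H]; exists th => // z xz.
by apply: (H z); rewrite -ball_normE.
Qed.

Lemma open_norm_lt (V : set 'rV[R]_a) x : open V -> V x ->
  exists2 th : R, 0 < th & forall z, `|x - z| < th -> V z.
Proof.
move=> oV Vx; have /nbhs_ballP [th th0 H] : nbhs x V by exact: open_nbhs_nbhs.
by exists th => // z xz; apply: H; rewrite -ball_normE.
Qed.
End NormBalls.

Section Charts.
Variables (R : realType) (N k : nat) (M : set 'rV[R]_N).
Local Notation d := (mdistM M).

Record chart_at (p : 'rV[R]_N) (V : set 'rV[R]_N) (phi : 'rV[R]_k -> 'rV[R]_N)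
    (psi : 'rV[R]_N -> 'rV[R]_k) (r C : R) : Prop := ChartAt {
  chart_open : open V;
  chart_center : V p;
  chart_radius_gt0 : 0 < r;
  chart_lipschitz_ge0 : 0 <= C;
  chart_ball u : ball (psi p) r u -> [/\ M (phi u), V (phi u) & psi (phi u) = u];
  chart_psiK x : M x -> V x -> phi (psi x) = x;
  chart_psi_continuous : {within M `&` V, continuous psi};
  chart_lipschitz u v : ball (psi p) r u -> ball (psi p) r v ->
    (d (phi u) (phi v) <= (C * `|v - u|)%:E)%E;
  chart_phi_continuous u : ball (psi p) r u -> {for u, continuous phi} }.

Lemma exists_chart_at p : embedded_submanifold N k M -> M p ->
  exists V phi psi r C, chart_at p V phi psi r C.
Proof.
move=> emb Mp; have [U [V [phi [psi [[oU oV Vp] [sm [_ [img [inv cpsi]]]]]]]]] := emb p Mp.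
have [u1 Uu1 pu1] : (phi @` U) p by rewrite img.
have psip : psi p = u1 by rewrite -pu1 inv.
have [r [C [r0 C0 bU lip]]] := smooth_locally_lipschitz oU sm Uu1.
have phiU u : ball (psi p) r u -> [/\ M (phi u), V (phi u) & psi (phi u) = u].
  rewrite psip => /bU Uu.
  have [] : (M `&` V) (phi u) by rewrite -img; exists u.
  by split => //; exact: inv.
exists V, phi, psi, r, C; split => //.
- move=> x Mx Vx; have : (M `&` V) x by [].
  by rewrite -img => -[u Uu <-]; rewrite inv.
- apply: mdistM_image_segment_le => //; first by move=> u /phiU [].
  by rewrite psip; exact: lip.
- move=> u; rewrite psip => /bU Uu.
  exact: differentiable_continuous (sm [::] _ Uu).
Qed.

Section ChartAt.
Variables (p : 'rV[R]_N) (V : set 'rV[R]_N) (phi : 'rV[R]_k -> 'rV[R]_N)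
  (psi : 'rV[R]_N -> 'rV[R]_k) (r C : R).
Hypotheses (Mp : M p) (ch : chart_at p V phi psi r C).

Lemma chart_near_center (eta : R) : 0 < eta -> exists2 th : R, 0 < th &
  forall z, M z -> `|p - z| < th -> V z /\ `|psi p - psi z| < eta.
Proof.
move=> eta0; have Vp := chart_center ch.
have [th1 th10 near_psi] := within_continuous_norm_lt (chart_psi_continuous ch) (conj Mp Vp) eta0.
have [th2 th20 near_V] := open_norm_lt (chart_open ch) Vp.
exists (Num.min th1 th2); first by rewrite lt_min th10 th20.
move=> z Mz; rewrite lt_min => /andP[z1 /near_V Vz]; split => //.
exact: near_psi.
Qed.

Lemma chart_mdistM_lt (e : R) : 0 < e -> exists2 th : R, 0 < th &
  forall z, M z -> `|p - z| < th -> (d p z < e%:E)%E.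
Proof.
move=> e0; have C1 : 0 < C + 1 by rewrite ltr_pwDr // (chart_lipschitz_ge0 ch).
have eta0 : 0 < Num.min r (e / (C + 1)).
  by rewrite lt_min (chart_radius_gt0 ch) divr_gt0.
have [th th0 near] := chart_near_center eta0.
exists th => // z Mz /(near _ Mz) [Vz]; rewrite lt_min => /andP[zr ze].
have bp : ball (psi p) r (psi p) by exact: ballxx (chart_radius_gt0 ch).
have bz : ball (psi p) r (psi z) by rewrite -ball_normE.
rewrite -(chart_psiK ch Mp (chart_center ch)) -(chart_psiK ch Mz Vz).
apply: le_lt_trans (chart_lipschitz ch bp bz) _; rewrite lte_fin distrC.
rewrite ltr_pdivlMr // in ze; apply: le_lt_trans ze.
by rewrite mulrC ler_wpM2l // lerDl.
Qed.

Section ChartPush.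
Variables (tau eta : R) (a : 'rV[R]_N) (D : 'rV[R]_k).
Hypotheses (tau0 : 0 < tau) (eta_r : 3 * eta <= r) (D_le : `|D| <= 2 * eta) (pa : `|p - a| < tau)
  (near_center : forall z, M z -> `|p - z| < 2 * tau -> V z /\ `|psi p - psi z| < eta).

Definition bump x := Num.max (1 - `|a - x| / tau) 0.

(* Move along [D] in chart coordinates, fully at [a] and not at all outside [ball a tau]. *)
Definition chart_push x :=
  if `|p - x| < 2 * tau then phi (psi x + bump x *: D) else x.

Lemma bump_ge0 x : 0 <= bump x.
Proof. by rewrite /bump le_max lexx orbT. Qed.

Lemma bump_le1 x : bump x <= 1.
Proof. by rewrite /bump ge_max ler01 andbT lerBlDr lerDl divr_ge0 // ltW. Qed.

Lemma bump_center : bump a = 1.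
Proof. by rewrite /bump subrr normr0 mul0r subr0; case: leP => //; lra. Qed.

Lemma bump_eq0 x : tau <= `|a - x| -> bump x = 0.
Proof.
move=> ax; rewrite /bump; have : 1 - `|a - x| / tau <= 0 by rewrite subr_le0 ler_pdivlMr ?mul1r.
by case: leP => //; lra.
Qed.

Lemma bump_lipschitz x y : `|bump x - bump y| <= `|x - y| / tau.
Proof.
have AB : `| `|a - x| / tau - `|a - y| / tau | <= `|x - y| / tau.
  have tauV0 : 0 <= tau^-1 by rewrite invr_ge0 ltW.
  rewrite -mulrBl normrM (ger0_norm tauV0) ler_wpM2r //.
  apply: le_trans (ler_dist_dist _ _) _.
  by rewrite (_ : a - x - (a - y) = y - x) 1?distrC //; apply/rowP => j; rewrite !mxE; ring.
move: AB; rewrite !ler_norml /bump => /andP[h1 h2].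
by case: (leP (1 - `|a - x| / tau) 0) => ?; case: (leP (1 - `|a - y| / tau) 0) => ?;
  apply/andP; split; lra.
Qed.

Lemma chart_push_ball x s : M x -> `|p - x| < 2 * tau -> 0 <= s -> s <= 1 ->
  ball (psi p) r (psi x + s *: D).
Proof.
move=> Mx /(near_center Mx) [_ px] s0 s1.
have sD : `|s *: D| <= 2 * eta.
  by rewrite mx_normZ ger0_norm //; apply: le_trans D_le; rewrite ler_piMl.
rewrite -ball_normE /= opprD addrA; apply: le_lt_trans (ler_normB _ _) _.
by apply: lt_le_trans (ltr_leD px sD) (le_trans _ eta_r); lra.
Qed.

Lemma chart_push_in x : M x -> M (chart_push x).
Proof.
move=> Mx; rewrite /chart_push; case: ifP => // px.
by have [] := chart_ball ch (chart_push_ball Mx px (bump_ge0 x) (bump_le1 x)).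
Qed.

Lemma chart_push_id x : M x -> bump x = 0 -> chart_push x = x.
Proof.
move=> Mx bx; rewrite /chart_push bx scale0r addr0; case: ifP => // /(near_center Mx) [Vx _].
by rewrite (chart_psiK ch Mx Vx).
Qed.

Lemma chart_push_center : chart_push a = phi (psi a + D).
Proof.
have pa2 : `|p - a| < 2 * tau by apply: lt_le_trans pa _; rewrite ler_pMl // ler1n.
by rewrite /chart_push pa2 bump_center scale1r.
Qed.

Lemma chart_push_displacement x : M x -> (d x (chart_push x) <= (C * (2 * eta))%:E)%E.
Proof.
move=> Mx; rewrite /chart_push; case: ifP => px; last first.
  rewrite mdistM_xx // lee_fin mulr_ge0 ?(chart_lipschitz_ge0 ch) //.
  by apply: le_trans D_le.
have [Vx _] := near_center Mx px.
have := chart_lipschitz ch (chart_push_ball Mx px (lexx 0) ler01)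
  (chart_push_ball Mx px (bump_ge0 x) (bump_le1 x)).
rewrite scale0r addr0 (chart_psiK ch Mx Vx) [psi x + _]addrC addrK => /le_trans; apply.
rewrite lee_fin ler_wpM2l ?(chart_lipschitz_ge0 ch) // mx_normZ ger0_norm ?bump_ge0 //.
by apply: le_trans D_le; rewrite ler_piMl ?bump_le1.
Qed.

Lemma chart_push_continuous_in x : M x -> `|p - x| < 2 * tau ->
  forall t : R, 0 < t -> exists2 th : R, 0 < th &
    forall x', M x' -> `|x - x'| < th -> `|chart_push x - chart_push x'| < t.
Proof.
move=> Mx px t t0; have [Vx _] := near_center Mx px.
have [thp thp0 near_phi] :=
  continuous_norm_lt (chart_phi_continuous ch (chart_push_ball Mx px (bump_ge0 x) (bump_le1 x))) t0.
have thp2 : 0 < thp / 2 by rewrite divr_gt0.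
have [ths ths0 near_psi] :=
  within_continuous_norm_lt (chart_psi_continuous ch) (conj Mx Vx) thp2.
have D1 : 0 < 2 * (`|D| + 1) by rewrite mulr_gt0 // ltr_pwDr.
exists (Num.min (2 * tau - `|p - x|) (Num.min ths (thp * tau / (2 * (`|D| + 1))))).
  by rewrite !lt_min subr_gt0 px ths0 !divr_gt0 // mulr_gt0.
move=> x' Mx'; rewrite !lt_min => /andP[xx'1 /andP[xx'2 xx'3]].
have px' : `|p - x'| < 2 * tau.
  by apply: le_lt_trans (ler_distD x p x') _; rewrite -ltrBrDl.
have [Vx' _] := near_center Mx' px'.
rewrite /chart_push px px'; apply: near_phi.
have -> : psi x + bump x *: D - (psi x' + bump x' *: D) =
    (psi x - psi x') + (bump x - bump x') *: D.
  by apply/rowP => j; rewrite !mxE; ring.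
apply: le_lt_trans (ler_normD _ _) _; rewrite mx_normZ (splitr thp).
apply: ltr_leD (near_psi _ (conj Mx' Vx') xx'2) _.
apply: le_trans (ler_wpM2r (normr_ge0 D) (bump_lipschitz x x')) _.
set q := `|x - x'| / tau.
have : q * (2 * (`|D| + 1)) < thp by rewrite /q mulrAC ltr_pdivrMr // -ltr_pdivlMr.
have -> : q * (2 * (`|D| + 1)) = 2 * (q * `|D|) + 2 * q by ring.
have : 0 <= q by rewrite divr_ge0 // ltW.
lra.
Qed.

Lemma chart_push_continuous_out x : M x -> 2 * tau <= `|p - x| ->
  forall t : R, 0 < t -> exists2 th : R, 0 < th &
    forall x', M x' -> `|x - x'| < th -> `|chart_push x - chart_push x'| < t.
Proof.
move=> Mx px t t0; have ax : tau < `|a - x|.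
  rewrite -(ltrD2l `|p - a|); apply: lt_le_trans (ler_distD a p x).
  by apply: lt_le_trans px; rewrite (_ : 2 * tau = tau + tau) ?ltrD2r //; ring.
exists (Num.min (`|a - x| - tau) t); first by rewrite lt_min subr_gt0 ax t0.
move=> x' Mx'; rewrite lt_min => /andP[xx'1 xx'2].
have ax' : tau <= `|a - x'|.
  by have := ler_distD x' a x; rewrite (distrC x' x); lra.
by rewrite (chart_push_id Mx (bump_eq0 (ltW ax))) (chart_push_id Mx' (bump_eq0 ax')).
Qed.

End ChartPush.
End ChartAt.
End Charts.

Section Pushes.
Variables (R : realType) (N k : nat) (M : set 'rV[R]_N).
Local Notation d := (mdistM M).
Hypothesis emb : embedded_submanifold N k M.

Lemma mdistM_lt_near p (e : R) : M p -> 0 < e -> exists2 th : R, 0 < th &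
  forall z, M z -> `|p - z| < th -> (d p z < e%:E)%E.
Proof.
move=> Mp e0; have [V [phi [psi [r [C ch]]]]] := exists_chart_at emb Mp.
exact: (chart_mdistM_lt Mp ch e0).
Qed.

Lemma C0map_of_norm_continuous (f : 'rV[R]_N -> 'rV[R]_N) :
  (forall x, M x -> M (f x)) ->
  (forall x, M x -> forall t : R, 0 < t -> exists2 th : R, 0 < th &
     forall x', M x' -> `|x - x'| < th -> `|f x - f x'| < t) -> C0map M f.
Proof.
move=> fM fc; split => // x Mx e e0.
have [th th0 near_fx] := mdistM_lt_near (fM x Mx) e0.
have [th' th'0 near_x] := fc x Mx th th0.
exists th' => // x' Mx' /mdistM_lt_norm xx'; apply: near_fx (fM _ Mx') _.
by apply: near_x; rewrite // distrC.
Qed.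

Definition pushes (a b : 'rV[R]_N) (rho : R) (f : 'rV[R]_N -> 'rV[R]_N) :=
  [/\ C0map M f, f a = b & forall x, M x -> (d x (f x) < rho%:E)%E].

Lemma local_push p rho : 0 < rho -> M p -> exists2 tau, 0 < tau &
  forall a b, M a -> M b -> `|p - a| < tau -> `|a - b| < tau -> exists f, pushes a b rho f.
Proof.
move=> rho0 Mp; have [V [phi [psi [r [C ch]]]]] := exists_chart_at emb Mp.
have C0 := chart_lipschitz_ge0 ch; have r0 := chart_radius_gt0 ch.
have C1 : 0 < C + 1 by rewrite ltr_pwDr.
(* [3 * eta <= r] keeps pushed points in the chart ball; pushes then move by [<= C * 2 eta]. *)
pose eta := Num.min (r / 3) (rho / (4 * (C + 1))).
have eta0 : 0 < eta by rewrite lt_min !divr_gt0 // mulr_gt0.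
have eta_r : 3 * eta <= r by rewrite mulrC -ler_pdivlMr // ge_min lexx.
have eta_rho : C * (2 * eta) < rho.
  have : eta * (4 * (C + 1)) <= rho by rewrite -ler_pdivlMr ?mulr_gt0 // ge_min lexx orbT.
  have : C * eta <= (C + 1) * eta by rewrite ler_wpM2r ?lerDl // ltW.
  have -> : eta * (4 * (C + 1)) = 4 * ((C + 1) * eta) by ring.
  lra.
have [th th0 near] := chart_near_center Mp ch eta0.
have tau0 : 0 < th / 2 by rewrite divr_gt0.
have near2 z : M z -> `|p - z| < 2 * (th / 2) -> V z /\ `|psi p - psi z| < eta.
  by rewrite mulrC divfK //; exact: near.
exists (th / 2) => // a b Ma Mb pa ab.
have pb : `|p - b| < 2 * (th / 2).
  by apply: le_lt_trans (ler_distD a p b) _; rewrite mulr2n mulrDl mul1r ltrD.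
have pa2 : `|p - a| < 2 * (th / 2) by apply: lt_le_trans pa _; rewrite ler_pMl // ler1n.
have [_ pa'] := near2 a Ma pa2; have [Vb pb'] := near2 b Mb pb.
pose D := psi b - psi a.
have D_le : `|D| <= 2 * eta.
  apply/ltW/(le_lt_trans (ler_distD (psi p) _ _)).
  by rewrite distrC mulr2n mulrDl mul1r ltrD.
exists (chart_push p phi psi (th / 2) a D); split.
- apply: C0map_of_norm_continuous => x Mx.
    exact: (chart_push_in ch a tau0 eta_r D_le near2 Mx).
  case: (ltP `|p - x| (2 * (th / 2))) => px.
    exact: (chart_push_continuous_in ch a tau0 eta_r D_le near2 Mx px).
  exact: (chart_push_continuous_out ch D tau0 pa near2 Mx px).
- by rewrite (chart_push_center phi psi D tau0 pa) /D addrC subrK (chart_psiK ch Mb Vb).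
- move=> x Mx; apply: le_lt_trans (chart_push_displacement ch a tau0 eta_r D_le near2 Mx) _.
  by rewrite lte_fin.
Qed.

Lemma seq_positive_lower_bound (T : eqType) (s : seq T) (g : T -> R) :
  (forall x, x \in s -> 0 < g x) -> exists2 m, 0 < m & forall x, x \in s -> m <= g x.
Proof.
elim: s => [|x s IH] gs; first by exists 1.
have [m m0 le_m] : exists2 m, 0 < m & forall y, y \in s -> m <= g y.
  by apply: IH => y ys; apply: gs; rewrite inE ys orbT.
exists (Num.min m (g x)); first by rewrite lt_min m0 gs ?mem_head.
move=> y; rewrite inE => /orP[/eqP ->|ys]; first by rewrite ge_min lexx orbT.
by rewrite ge_min le_m.
Qed.

Lemma uniform_push rho : 0 < rho -> compact M -> exists2 del, 0 < del &
  forall a b, M a -> M b -> `|a - b| < del -> exists f, pushes a b rho f.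
Proof.
move=> rho0 cM.
have /choice [tau tauP] : forall p, exists tau : R, M p -> 0 < tau /\
    forall a b, M a -> M b -> `|p - a| < tau -> `|a - b| < tau -> exists f, pushes a b rho f.
  move=> p; case: (pselect (M p)) => [Mp|nMp]; last by exists 1.
  by have [t t0 H] := local_push rho0 Mp; exists t.
move: cM; rewrite compact_cover => /(_ _ M (fun p => ball p (tau p))) [].
- by move=> p _; exact: ball_open.
- by move=> x Mx; exists x => //; apply: ballxx; case: (tauP x Mx).
move=> P PM cover.
have [del del0 le_del] := @seq_positive_lower_bound _ (finmap.enum_fset P) tau
  (fun p pP => (tauP p (set_mem (PM p pP))).1).
exists del => // a b Ma Mb ab; have [p pP pa] := cover a Ma.
apply: (tauP p (set_mem (PM p pP))).2 => //; first by move: pa; rewrite -ball_normE.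
exact: lt_le_trans ab (le_del p pP).
Qed.

End Pushes.

(** * Perturbed iterated function systems *)

Section IFSOrbits.
Variables (R : realType) (N : nat) (M : set 'rV[R]_N).
Local Notation d := (mdistM M).
Implicit Types (f g : 'rV[R]_N -> 'rV[R]_N).

Lemma dC0_le f g (c : R) :
  (forall z, M z -> (d (f z) (g z) <= c%:E)%E) -> (dC0 M f g <= c%:E)%E.
Proof. by move=> h; apply: ge_ereal_sup => _ [z Mz <-]; exact: h. Qed.

Lemma mdistM_le_dC0 f g z : M z -> (d (f z) (g z) <= dC0 M f g)%E.
Proof. by move=> Mz; apply: ereal_sup_ubound; exists z. Qed.

Lemma C0map_id : C0map M id.
Proof. by split => // x Mx e e0; exists e. Qed.

Lemma compo_in (L : Type) (omega : L -> 'rV[R]_N -> 'rV[R]_N) sigma :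
  (forall l z, M z -> M (omega l z)) -> forall j z, M z -> M (compo omega sigma j z).
Proof. by move=> omegaM; elim=> [|j IH] z Mz //=; apply: omegaM; exact: IH. Qed.

Lemma compo_continuous (L : metricType R) (omega : L -> 'rV[R]_N -> 'rV[R]_N) sigma :
  IFS M omega -> forall j y, M y -> forall e : R, 0 < e ->
  exists2 th : R, 0 < th & forall z, M z -> (d y z < th%:E)%E ->
    (d (compo omega sigma j y) (compo omega sigma j z) < e%:E)%E.
Proof.
move=> [_ [omegaM omega_cont]]; elim=> [|j IH] y My e e0 /=; first by exists e.
have [th1 th10 near1] := omega_cont (sigma j) _ (compo_in sigma omegaM j My) e e0.
have [th2 th20 near2] := IH y My th1 th10.
exists th2 => // z Mz yz.
by apply: near1; [exact: compo_in | rewrite mdistxx | exact: near2].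
Qed.

End IFSOrbits.

Section PerturbedIFS.
Variables (R : realType) (N : nat) (M : set 'rV[R]_N) (L : metricType R).
Variables (omega : L -> 'rV[R]_N -> 'rV[R]_N) (Phi : nat -> 'rV[R]_N -> 'rV[R]_N) (n : nat).
Local Notation d := (mdistM M).
Local Notation I := (discrete_ord R n.+1).

(* Parameter [(l, i.+1)] applies [Phi i] after [omega l]; parameter [(l, 0)] is [omega l]. *)
Definition perturbed_ifs (l : L * I) (z : 'rV[R]_N) :=
  (if nat_of_ord l.2 is m.+1 then Phi m else id) (omega l.1 z).

Definition perturbed_seq (sigma : nat -> L) (m : nat) : L * I :=
  (sigma m, if (m < n)%N then inord m.+1 else ord0).

Lemma IFS_perturbed : IFS M omega -> (forall m, C0map M (Phi m)) -> IFS M perturbed_ifs.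
Proof.
move=> [cL [omegaM omega_cont]] PhiC.
have stepC (i : I) : C0map M (if nat_of_ord i is m.+1 then Phi m else id).
  by case: (nat_of_ord i) => [|m]; [exact: C0map_id | exact: PhiC].
split; first exact: compact_prod_discrete_ord.
split=> [[l i] z Mz|[l i] z Mz e e0]; first by apply: (stepC i).1; exact: omegaM.
have [th1 th10 near1] := (stepC i).2 _ (omegaM l z Mz) e e0.
have [th2 th20 near2] := omega_cont l z Mz th1 th10.
exists (Num.min th2 1); first by rewrite lt_min th20 ltr01.
move=> [l' i'] z' Mz' /mdist_prod_lt [] /=; rewrite lt_min => /andP[ll' _].
rewrite lt_min => /andP[_ /discrete_mdist_lt1 <-] zz'.
apply: near1; first exact: omegaM.
by apply: near2 => //; apply: lt_le_trans zz' _; rewrite lee_fin ge_min lexx.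
Qed.

Lemma dC0_perturbed_le (rho : R) : 0 <= rho -> (forall l z, M z -> M (omega l z)) ->
  (forall m z, M z -> (d z (Phi m z) <= rho%:E)%E) ->
  forall l i, (dC0 M (omega l) (perturbed_ifs (l, i)) <= rho%:E)%E.
Proof.
move=> rho0 omegaM Phi_near l i; apply: dC0_le => z Mz; rewrite /perturbed_ifs /=.
have Mz' := omegaM l z Mz.
by case: (nat_of_ord i) => [|m] /=; [rewrite mdistM_xx ?lee_fin | exact: Phi_near].
Qed.

Lemma dH_le_perturbed (rho : R) :
  (forall l i, (dC0 M (omega l) (perturbed_ifs (l, i)) <= rho%:E)%E) ->
  dH_le M omega perturbed_ifs rho.
Proof.
move=> le_rho; split=> [l e e0|[l i] e e0]; [exists (l, ord0) | exists l];
  by apply: le_lt_trans (le_rho _ _) _; rewrite lte_fin ltrDl.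
Qed.

Lemma compo_perturbed_seq (x : nat -> 'rV[R]_N) sigma :
  (forall m, Phi m (omega (sigma m) (x m)) = x m.+1) ->
  forall j, (j <= n)%N -> compo perturbed_ifs (perturbed_seq sigma) j (x 0%N) = x j.
Proof.
move=> Phi_step; elim=> [|j IH] jn //=.
by rewrite IH ?(ltnW jn) // /perturbed_ifs /perturbed_seq /= jn inordK.
Qed.

End PerturbedIFS.

(** * Shadowing *)

Lemma compact_cluster_point (R : realType) N (M : set 'rV[R]_N) (Y : nat -> 'rV[R]_N) :
  compact M -> (forall n, M (Y n)) -> exists2 y, M y &
    forall tau : R, 0 < tau -> forall K, exists2 n, (K <= n)%N & `|y - Y n| < tau.
Proof.
move=> cM YM; have FM : (Y @ \oo) M by exists 0%N => // n _; exact: YM.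
have [y [My cl]] := cM _ (fmap_proper_filter Y _) FM.
exists y => // tau tau0 K.
have FK : (Y @ \oo) [set Y n | n in [set n | (K <= n)%N]].
  by apply: filterS (nbhs_infty_ge K) => n Kn; exists n.
have [_ [[n Kn <-] yn]] := cl _ (ball y tau) FK (nbhsx_ballx y tau tau0).
by exists n => //; move: yn; rewrite -ball_normE.
Qed.

Section Shadowing.
Variables (R : realType) (N : nat) (M : set 'rV[R]_N) (L : metricType R).
Variable omega : L -> 'rV[R]_N -> 'rV[R]_N.
Hypothesis ifs : IFS M omega.
Local Notation d := (mdistM M).

Lemma finite_shadowing (eps : R) : topologically_stable M omega -> 0 < eps ->
  exists2 delta : R, 0 < delta & forall x sigma Phi,
    (forall m, pushes M (omega (sigma m) (x m)) (x m.+1) (delta / 2) (Phi m)) ->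
    M (x 0%N) -> forall n, exists2 y, M y &
      forall j, (j <= n)%N -> (d (compo omega sigma j y) (x j) < eps%:E)%E.
Proof.
move=> ts eps0; have [delta delta0 stab] := ts eps eps0.
exists delta => // x sigma Phi PhiP Mx0 n.
have delta2 : ((delta / 2)%:E < delta%:E)%E.
  by rewrite lte_fin ltr_pdivrMr // ltr_pMr // ltr1n.
pose omega' := perturbed_ifs (n := n) omega Phi; pose sigma' := perturbed_seq n sigma.
have dC0_le_delta2 l i : (dC0 M (omega l) (omega' (l, i)) <= (delta / 2)%:E)%E.
  apply: dC0_perturbed_le; [by rewrite divr_ge0 // ltW | exact: ifs.2.1 |].
  by move=> m z Mz; case: (PhiP m) => _ _ /(_ z Mz) /ltW.
have ifs' : IFS M omega' by apply: IFS_perturbed => // m; case: (PhiP m).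
have dH : dH_le M omega omega' delta.
  by apply: dH_le_perturbed => l i; exact: le_trans (dC0_le_delta2 l i) (ltW delta2).
have [h [hC hconj _]] := stab _ _ ifs' dH sigma sigma'
  (fun m => le_lt_trans (dC0_le_delta2 _ _) delta2).
exists (h (x 0%N)) => [|j jn]; first exact: hC.1.
have orbit : compo omega' sigma' j (x 0%N) = x j.
  by apply: compo_perturbed_seq => // m; case: (PhiP m).
apply: le_lt_trans (hconj j).
by rewrite -orbit; exact: (mdistM_le_dC0 (compo omega sigma j \o h) _ Mx0).
Qed.

Lemma shadowing_of_finite_shadowing k (eps : R) x sigma :
  embedded_submanifold N k M -> compact M -> 0 < eps ->
  (forall n, exists2 y, M y &
    forall j, (j <= n)%N -> (d (compo omega sigma j y) (x j) < (eps / 2)%:E)%E) ->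
  exists2 y, M y & forall j, (d (x j) (compo omega sigma j y) < eps%:E)%E.
Proof.
move=> emb cM eps0 shadow_upto.
have /choice [Y YP] : forall n, exists y, M y /\
    forall j, (j <= n)%N -> (d (compo omega sigma j y) (x j) < (eps / 2)%:E)%E.
  by move=> n; have [y My Py] := shadow_upto n; exists y.
have YM n : M (Y n) by case: (YP n).
have [y My cluster] := compact_cluster_point cM YM.
exists y => // j; have eps2 : 0 < eps / 2 by rewrite divr_gt0.
have [th th0 near_orbit] := compo_continuous sigma ifs j My eps2.
have [tau tau0 near_y] := mdistM_lt_near emb My th0.
have [n jn yYn] := cluster tau tau0 j.
rewrite mdistM_sym (splitr eps).
exact: mdistM_lt_triangle (near_orbit _ (YM n) (near_y _ (YM n) yYn)) ((YP n).2 j jn).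
Qed.

End Shadowing.

Unset Implicit Arguments. Set Strict Implicit.

Theorem theorem2 (R : realType) (N k : nat) (M : set 'rV[R]_N)
    (L : metricType R) (omega : L -> 'rV[R]_N -> 'rV[R]_N) :
  embedded_submanifold N k M -> compact M ->
  IFS M omega -> topologically_stable M omega ->
  concordant_shadowing M omega.
Proof.
move=> emb cM ifs ts eps eps0.
have [delta delta0 shadow_upto] := finite_shadowing ifs ts (divr_gt0 eps0 (ltr0Sn R 1)).
have [del del0 push] := uniform_push emb (divr_gt0 delta0 (ltr0Sn R 1)) cM.
exists (del / 2) => [|x sigma [xM chain]]; first by rewrite divr_gt0.
have /choice [Phi PhiP] :
    forall m, exists f, pushes M (omega (sigma m) (x m)) (x m.+1) (delta / 2) f.
  move=> m; apply: push; [exact: ifs.2.1 | exact: xM |].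
  by apply: (@mdistM_lt_norm _ _ M); apply: le_lt_trans (chain m) _; rewrite lte_fin; lra.
exact: shadowing_of_finite_shadowing emb cM eps0 (shadow_upto x sigma Phi PhiP (xM 0%N)).
Qed.
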